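(* Let $\epsilon\in(0,1)$, $u_0\in\mathbb{R}\setminus\{0,1,-1\}$, and let $h^*=\frac{2\epsilon^2}{u_0^2+|u_0|}$ if $|u_0|>1$ and $h^*=\epsilon^2$ if $0<|u_0|<1$. For every $h\in(0,h^*]$, any real sequence $(u_n)_{n\ge0}$ starting at $u_0$ and satisfying the Crank–Nicolson scheme $$\frac{u_n-u_{n-1}}{h}+\frac{1}{2\epsilon^2}\big(u_n^3-u_n\big)+\frac{1}{2\epsilon^2}\big(u_{n-1}^3-u_{n-1}\big)=0,\qquad n\ge1,$$ satisfies $E(u_n)\le E(u_{n-1})$ for all $n\ge1$, where $E(v)=\frac{1}{4\epsilon^2}(v^2-1)^2$.
   Context: The scheme discretizes the ODE $u'(t)+\frac{1}{\epsilon^2}(u^3-u)=0$, $u(0)=u_0$. For $h\le2\epsilon^2$ each step equation has a unique real solution. *)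

From Stdlib Require Import Reals Lra.
Open Scope R_scope.

Definition energy (eps v : R) : R := (v ^ 2 - 1) ^ 2 / (4 * eps ^ 2).

Definition hstar (eps u0 : R) : R :=
  if Rlt_dec 1 (Rabs u0) then 2 * eps ^ 2 / (u0 ^ 2 + Rabs u0) else eps ^ 2.

Definition cn_step (eps h a b : R) : Prop :=
  (b - a) / h + (b ^ 3 - b) / (2 * eps ^ 2) + (a ^ 3 - a) / (2 * eps ^ 2) = 0.

From Stdlib Require Import Reals Lra Psatz.
Open Scope R_scope.

(* With [k = h / (2 eps^2)] a step reads [g b = f a] for the implicit part
   [g x = x + k (x^3 - x)] and the explicit part [f x = x - k (x^3 - x)]; [g] is
   increasing when [k <= 1/2].  For [0 <= a] and [k (a^2 + a) <= 1], [f a] lies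
   between [g a] and [g 1 = 1], so [b] lies between [a] and the equilibrium [1].
   The choice of [h^*] gives [k <= 1/2] and [k (|u0|^2 + |u0|) <= 1], so from
   [u0 >= 0] every iterate stays between [u0] and [1], where the condition on [k]
   persists; moving towards [1] decreases [|v^2 - 1|], hence the energy.  The odd
   symmetry of the scheme and the evenness of [E] reduce [u0 < 0] to this case. *)

Definition between (x y z : R) : Prop := (z - x) * (z - y) <= 0.

Lemma between_bounds x y z : x <= y -> between x y z -> x <= z <= y.
Proof. unfold between; intros; split; nra. Qed.
Lemma between_sym x y z : between x y z -> between y x z.
Proof. unfold between; intros; nra. Qed.
Lemma between_nonneg x y z : 0 <= x -> 0 <= y -> between x y z -> 0 <= z.
Proof. unfold between; intros; nra. Qed.

Lemma between_trans x y z w : between x y z -> between z y w -> between x y w.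
Proof.
  intros Hz Hw; unfold between.
  destruct (Rle_dec x y) as [xy | yx].
  - apply between_bounds in Hz; [|lra].
    apply between_bounds in Hw; [|lra]. nra.
  - apply between_sym, between_bounds in Hz; [|lra].
    apply between_sym, between_bounds in Hw; [|lra]. nra.
Qed.

Lemma between_sqr a b : 0 <= a -> between a 1 b -> between (a ^ 2) 1 (b ^ 2).
Proof.
  unfold between; intros a_ge0 Hb.
  assert (b_ge0 : 0 <= b) by nra.
  replace ((b ^ 2 - a ^ 2) * (b ^ 2 - 1))
    with ((b - a) * (b - 1) * ((b + a) * (b + 1))) by ring.
  assert (0 <= (b + a) * (b + 1)) by nra.
  nra.
Qed.

Lemma cn_step_opp eps h a b : cn_step eps h a b -> cn_step eps h (- a) (- b).
Proof.
  unfold cn_step; intros H.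
  replace ((- b - - a) / h + ((- b) ^ 3 - - b) / (2 * eps ^ 2)
           + ((- a) ^ 3 - - a) / (2 * eps ^ 2))
    with (- ((b - a) / h + (b ^ 3 - b) / (2 * eps ^ 2) + (a ^ 3 - a) / (2 * eps ^ 2)))
    by (unfold Rdiv; ring).
  rewrite H; ring.
Qed.

Lemma energy_opp eps v : energy eps (- v) = energy eps v.
Proof. unfold energy, Rdiv; ring. Qed.

Lemma energy_le_of_between eps a b :
  0 < eps -> between (a ^ 2) 1 (b ^ 2) -> energy eps b <= energy eps a.
Proof.
  unfold between, energy; intros eps_gt0 Hb.
  apply Rmult_le_compat_r.
  - apply Rlt_le, Rinv_0_lt_compat; nra.
  - set (A := a ^ 2 - 1) in *; set (B := b ^ 2 - 1) in *.
    replace (b ^ 2 - a ^ 2) with (B - A) in Hb by (unfold A, B; ring).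
    nra.
Qed.

Lemma cn_step_scaled eps h a b :
  0 < eps -> 0 < h -> cn_step eps h a b ->
  b + h / (2 * eps ^ 2) * (b ^ 3 - b) = a - h / (2 * eps ^ 2) * (a ^ 3 - a).
Proof.
  unfold cn_step; intros eps_gt0 h_gt0 H.
  assert (E : b + h / (2 * eps ^ 2) * (b ^ 3 - b) - (a - h / (2 * eps ^ 2) * (a ^ 3 - a))
              = h * ((b - a) / h + (b ^ 3 - b) / (2 * eps ^ 2) + (a ^ 3 - a) / (2 * eps ^ 2)))
    by (field; split; nra).
  rewrite H, Rmult_0_r in E; lra.
Qed.

Section ScaledScheme.

Variable k : R.
Hypotheses (k_ge0 : 0 <= k) (k_le_half : k <= 1 / 2).

Lemma implicit_part_lt x y : x < y -> x + k * (x ^ 3 - x) < y + k * (y ^ 3 - y).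
Proof.
  intros xy.
  assert (E : y + k * (y ^ 3 - y) - (x + k * (x ^ 3 - x))
              = (y - x) * ((1 - k) + k * (x * x + x * y + y * y))) by ring.
  assert (0 <= k * (x * x + x * y + y * y)) by (apply Rmult_le_pos; nra).
  assert (0 < (y - x) * ((1 - k) + k * (x * x + x * y + y * y)))
    by (apply Rmult_lt_0_compat; lra).
  lra.
Qed.

Lemma implicit_part_le_inv x y :
  x + k * (x ^ 3 - x) <= y + k * (y ^ 3 - y) -> x <= y.
Proof.
  intros H; destruct (Rle_dec x y) as [| yx]; [assumption|].
  pose proof (implicit_part_lt y x ltac:(lra)); lra.
Qed.

Lemma scaled_step_between a b :
  0 <= a -> k * (a ^ 2 + a) <= 1 ->
  b + k * (b ^ 3 - b) = a - k * (a ^ 3 - a) -> between a 1 b.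
Proof.
  intros a_ge0 ka step.
  assert (explicit_vs_1 : a - k * (a ^ 3 - a) - 1 = (a - 1) * (1 - k * (a ^ 2 + a)))
    by ring.
  assert (explicit_vs_implicit :
            a - k * (a ^ 3 - a) - (a + k * (a ^ 3 - a)) = - 2 * k * a * ((a - 1) * (a + 1)))
    by ring.
  assert (g1 : 1 + k * (1 ^ 3 - 1) = 1) by ring.
  unfold between; destruct (Rle_dec a 1).
  - assert (a <= b).
    { apply implicit_part_le_inv; rewrite step.
      assert (0 <= k * a * ((1 - a) * (a + 1))) by (repeat apply Rmult_le_pos; lra).
      lra. }
    assert (b <= 1).
    { apply implicit_part_le_inv; rewrite step, g1.
      assert (0 <= (1 - a) * (1 - k * (a ^ 2 + a))) by (apply Rmult_le_pos; lra).
      lra. }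
    nra.
  - assert (b <= a).
    { apply implicit_part_le_inv; rewrite step.
      assert (0 <= k * a * ((a - 1) * (a + 1))) by (repeat apply Rmult_le_pos; lra).
      lra. }
    assert (1 <= b).
    { apply implicit_part_le_inv; rewrite step, g1.
      assert (0 <= (a - 1) * (1 - k * (a ^ 2 + a))) by (apply Rmult_le_pos; lra).
      lra. }
    nra.
Qed.

Lemma scaled_step_bound_between c a :
  0 <= c -> k * (c ^ 2 + c) <= 1 -> between c 1 a -> k * (a ^ 2 + a) <= 1.
Proof.
  intros c_ge0 kc Ha.
  destruct (Rle_dec c 1) as [c1 | c1].
  - apply between_bounds in Ha; [|lra].
    assert (a ^ 2 + a <= 2) by nra.
    nra.
  - apply between_sym, between_bounds in Ha; [|lra].
    assert (a ^ 2 + a <= c ^ 2 + c) by nra.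
    nra.
Qed.

Section Orbit.

Variable v : nat -> R.
Hypotheses (v0_ge0 : 0 <= v 0%nat) (k_v0 : k * (v 0%nat ^ 2 + v 0%nat) <= 1).
Hypothesis v_step :
  forall n, v (S n) + k * (v (S n) ^ 3 - v (S n)) = v n - k * (v n ^ 3 - v n).

Lemma orbit_step_between n : between (v 0%nat) 1 (v n) -> between (v n) 1 (v (S n)).
Proof.
  intros vn.
  apply scaled_step_between; [| | apply v_step].
  - apply (between_nonneg (v 0%nat) 1); [exact v0_ge0 | lra | exact vn].
  - apply (scaled_step_bound_between (v 0%nat)); assumption.
Qed.

Lemma orbit_between n : between (v 0%nat) 1 (v n).
Proof.
  induction n as [| n IH].
  - unfold between; nra.
  - apply (between_trans _ _ (v n)); [exact IH | exact (orbit_step_between n IH)].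
Qed.

End Orbit.

End ScaledScheme.

Lemma hstar_scaled_step_bounds eps u0 h :
  0 < eps -> 0 < h -> h <= hstar eps u0 ->
  h / (2 * eps ^ 2) <= 1 / 2 /\ h / (2 * eps ^ 2) * (Rabs u0 ^ 2 + Rabs u0) <= 1.
Proof.
  intros eps_gt0 h_gt0; unfold hstar; rewrite <- (pow2_abs u0).
  set (c := Rabs u0); assert (c_ge0 : 0 <= c) by apply Rabs_pos.
  assert (k_gt0 : 0 < h / (2 * eps ^ 2)) by (apply Rdiv_lt_0_compat; nra).
  assert (scaled_le_1 : forall m, 0 < m -> h <= 2 * eps ^ 2 / m -> h / (2 * eps ^ 2) * m <= 1).
  { intros m m_gt0 H.
    apply (Rmult_le_reg_r (2 * eps ^ 2)); [nra|].
    apply (Rmult_le_compat_r m) in H; [|lra].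
    replace (2 * eps ^ 2 / m * m) with (2 * eps ^ 2) in H by (field; lra).
    replace (h / (2 * eps ^ 2) * m * (2 * eps ^ 2)) with (h * m) by (field; nra).
    lra. }
  destruct Rlt_dec as [c_gt1 | c_le1]; intros h_le.
  - pose proof (scaled_le_1 (c ^ 2 + c) ltac:(nra) h_le).
    split; [nra | assumption].
  - assert (h / (2 * eps ^ 2) * 2 <= 1)
      by (apply scaled_le_1; [lra | replace (2 * eps ^ 2 / 2) with (eps ^ 2) by field; lra]).
    split; nra.
Qed.

Lemma cn_energy_decreasing_nonneg eps h (v : nat -> R) :
  0 < eps -> 0 < h -> 0 <= v 0%nat ->
  h / (2 * eps ^ 2) <= 1 / 2 -> h / (2 * eps ^ 2) * (v 0%nat ^ 2 + v 0%nat) <= 1 ->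
  (forall n, cn_step eps h (v n) (v (S n))) ->
  forall n, energy eps (v (S n)) <= energy eps (v n).
Proof.
  intros eps_gt0 h_gt0 v0_ge0 k_le_half k_v0 step n.
  set (k := h / (2 * eps ^ 2)) in *.
  assert (k_ge0 : 0 <= k) by (apply Rlt_le, Rdiv_lt_0_compat; nra).
  assert (v_step : forall n, v (S n) + k * (v (S n) ^ 3 - v (S n)) = v n - k * (v n ^ 3 - v n))
    by (intro m; apply (cn_step_scaled eps h); auto).
  pose proof (orbit_between k k_ge0 k_le_half v v0_ge0 k_v0 v_step n) as vn.
  apply energy_le_of_between, between_sqr; [exact eps_gt0 | |].
  - apply (between_nonneg (v 0%nat) 1); [exact v0_ge0 | lra | exact vn].
  - exact (orbit_step_between k k_ge0 k_le_half v v0_ge0 k_v0 v_step n vn).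
Qed.

Theorem theorem3p3 (eps u0 h : R) (u : nat -> R) :
  0 < eps < 1 ->
  u0 <> 0 -> u0 <> 1 -> u0 <> -1 ->
  0 < h <= hstar eps u0 ->
  u 0%nat = u0 ->
  (forall n : nat, (1 <= n)%nat -> cn_step eps h (u (n - 1)%nat) (u n)) ->
  forall n : nat, (1 <= n)%nat -> energy eps (u n) <= energy eps (u (n - 1)%nat).
Proof.
  intros [eps_gt0 _] _ _ _ [h_gt0 h_le] u0E step n n_ge1.
  destruct n as [| m]; [lia|]; replace (S m - 1)%nat with m by lia.
  assert (step_succ : forall n, cn_step eps h (u n) (u (S n))).
  { intro n; replace n with (S n - 1)%nat at 1 by lia; apply step; lia. }
  destruct (hstar_scaled_step_bounds eps u0 h eps_gt0 h_gt0 h_le) as [k_le_half ku0].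
  destruct (Rle_dec 0 u0) as [u0_ge0 | u0_lt0].
  - rewrite Rabs_right in ku0 by lra.
    apply (cn_energy_decreasing_nonneg eps h); rewrite ?u0E; auto.
  - rewrite Rabs_left in ku0 by lra.
    rewrite <- (energy_opp eps (u (S m))), <- (energy_opp eps (u m)).
    apply (cn_energy_decreasing_nonneg eps h (fun n => - u n)); rewrite ?u0E; try lra.
    intro n; apply cn_step_opp, step_succ.
Qed.
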